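(* Let $a,b\geq 1$ and $m,n,p,q>1$ be integers. The graph $aH_{m,p}\circ bH_{n,q}$ is distance magic if and only if $n\equiv 0\pmod 2$ or $mnabpq\equiv 1\pmod 2$.
   Context: A graph $G$ on $v$ vertices is distance magic if there is a bijection $f:V(G)\to\{1,\ldots,v\}$ and a constant $k$ such that for every vertex $x$, $\sum_{y\in N(x)}f(y)=k$, where $N(x)$ is the set of neighbours of $x$. $H_{n,p}$ denotes the complete multipartite graph with $p$ partite sets each of size $n$; $aH$ denotes the disjoint union of $a$ copies of $H$. The lexicographic product $G\circ H$ has vertex set $V(G)\times V(H)$, with $(g,h)$ adjacent to $(g',h')$ iff either $gg'\in E(G)$, or $g=g'$ and $hh'\in E(H)$. *)

From mathcomp Require Import all_boot.
Set Implicit Arguments. Unset Strict Implicit. Unset Printing Implicit Defensive.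

(* Distance magic: a bijection f : V -> {1,...,v} (encoded as a bijection
   onto 'I_v followed by +1) with constant neighbourhood label sums. *)
Definition distance_magic (T : finType) (e : rel T) : Prop :=
  exists f : T -> 'I_#|T|, bijective f /\
    exists k : nat, forall x : T, \sum_(y | e x y) (f y).+1 = k.

(* H_{n,p}: complete multipartite graph with p parts of size n.
   Vertex (i, j) = j-th vertex of part i; adjacent iff in different parts. *)
Definition Hvert (n p : nat) : finType := ('I_p * 'I_n)%type.
Definition Hrel (n p : nat) : rel (Hvert n p) := fun u v => u.1 != v.1.

Definition copies_rel (a : nat) (T : finType) (e : rel T) : rel ('I_a * T)%type :=
  fun u v => (u.1 == v.1) && e u.2 v.2.

Definition lex_rel (T1 T2 : finType) (e1 : rel T1) (e2 : rel T2)
  : rel (T1 * T2)%type :=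
  fun u v => e1 u.1 v.1 || ((u.1 == v.1) && e2 u.2 v.2).
Arguments copies_rel a {T} e.
Arguments Hrel n p : clear implicits.

From mathcomp Require Import all_boot zify.
Set Implicit Arguments. Unset Strict Implicit. Unset Printing Implicit Defensive.

(* In G = aH_{m,p} o bH_{n,q} the neighbourhood of (g, h) is N(g) x V(bH_{n,q}) together
   with {g} x N(h), and inside a copy of H_{n,q} the sum over N(h) is the total of the copy
   minus the sum of the part of h.  Hence in a distance magic labelling all parts of a copy
   of bH_{n,q} have the same label sum, and feeding this back into aH_{m,p} shows that this
   sum P is the same for all copies.  The labels 1, ..., tn (t parts of size n) then split
   into t parts of sum P, so 2P = n(tn + 1) and tn is odd whenever n is.
   Conversely, a Kotzig array (n permutations s_j of {0, ..., t-1} with equal column sums,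
   which exists when n > 1 is even or t is odd) gives the labelling j t + s_j(u) + 1 of the
   j-th vertex of part u, in which all parts have the same sum; as aH_{m,p} is regular,
   every neighbourhood sum is then the same. *)

Definition nbr_sum (T : finType) (e : rel T) (w : T -> nat) (x : T) : nat :=
  \sum_(y | e x y) w y.

Definition part_sum (n p : nat) (u : Hvert n p -> nat) (i : 'I_p) : nat :=
  \sum_(j < n) u (i, j).

Lemma nbr_sum_lex (T1 T2 : finType) (e1 : rel T1) (e2 : rel T2)
    (w : T1 * T2 -> nat) (x1 : T1) (x2 : T2) :
  irreflexive e1 ->
  nbr_sum (lex_rel e1 e2) w (x1, x2) =
  nbr_sum e1 (fun y1 => \sum_y2 w (y1, y2)) x1 + nbr_sum e2 (fun y2 => w (x1, y2)) x2.
Proof.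
move=> e1_irr; rewrite /nbr_sum (bigID (fun y => e1 x1 y.1)) /=; congr (_ + _).
  rewrite pair_big_dep; apply: eq_big => -[y1 y2] //=.
  by rewrite /lex_rel /= andbT; case: (e1 x1 y1); rewrite ?andbF.
rewrite -(big_pred1_eq addn x1 (fun y1 => \sum_(y2 | e2 x2 y2) w (y1, y2))) /= pair_big_dep.
apply: eq_big => -[y1 y2] //=; rewrite /lex_rel /= eq_sym.
by case: eqP => [->|_]; rewrite ?e1_irr ?andbT //= orbF andbN.
Qed.

Lemma nbr_sum_copies (a : nat) (T : finType) (e : rel T) (w : 'I_a * T -> nat) c x :
  nbr_sum (copies_rel a e) w (c, x) = nbr_sum e (fun y => w (c, y)) x.
Proof.
rewrite /nbr_sum -(big_pred1_eq addn c (fun c' => \sum_(y | e x y) w (c', y))) pair_big_dep.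
by apply: eq_big => -[c' y] //=; rewrite /copies_rel eq_sym.
Qed.

Lemma sum_pair (X Y : finType) (F : X * Y -> nat) :
  \sum_z F z = \sum_x \sum_y F (x, y).
Proof. by rewrite pair_big; apply: eq_bigr => -[]. Qed.

Lemma sum_Hvert n p (u : Hvert n p -> nat) : \sum_y u y = \sum_i part_sum u i.
Proof. exact: sum_pair. Qed.

Lemma nbr_sum_Hrel n p (u : Hvert n p -> nat) i j :
  nbr_sum (Hrel n p) u (i, j) + part_sum u i = \sum_y u y.
Proof.
rewrite sum_Hvert (bigD1 i) //= addnC; congr (_ + _).
rewrite /nbr_sum /part_sum pair_big_dep /=; apply: eq_big => -[i' j'] //=.
by rewrite /Hrel eq_sym andbT.
Qed.

Lemma irreflexive_copies_rel (a : nat) (T : finType) (e : rel T) :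
  irreflexive e -> irreflexive (copies_rel a e).
Proof. by move=> e_irr x; rewrite /copies_rel eqxx e_irr. Qed.

Lemma irreflexive_Hrel n p : irreflexive (Hrel n p).
Proof. by move=> x; rewrite /Hrel eqxx. Qed.

Lemma sum_copies_Hvert b n q (u : 'I_b * Hvert n q -> nat) :
  \sum_y u y = \sum_c \sum_i part_sum (fun y => u (c, y)) i.
Proof. by rewrite sum_pair; apply: eq_bigr => c _; rewrite sum_Hvert. Qed.

Lemma nbr_sum_cst (T : finType) (e : rel T) (C : nat) x :
  nbr_sum e (fun=> C) x = #|e x| * C.
Proof. by rewrite -sum_nat_const. Qed.

Lemma card_copies_Hrel_nbrs a m p x : #|copies_rel a (Hrel m p) x| = (p - 1) * m.
Proof.
case: x => c [i j]; rewrite -[LHS]muln1 -nbr_sum_cst nbr_sum_copies.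
have := nbr_sum_Hrel (fun=> 1) i j; rewrite /part_sum !sum_nat_const card_prod !card_ord.
rewrite mulnBl mul1n; lia.
Qed.

Lemma double_sum_succ_ord N : 2 * \sum_(i < N) i.+1 = N * N.+1.
Proof. by elim: N => [|N IH]; rewrite ?big_ord0 // big_ord_recr mulnDr IH /=; lia. Qed.

Lemma double_sum_bij_labels (T : finType) (f : T -> 'I_#|T|) :
  bijective f -> 2 * \sum_x (f x).+1 = #|T| * #|T|.+1.
Proof.
by move=> f_bij; rewrite -double_sum_succ_ord (reindex f) //; apply: onW_bij.
Qed.

Lemma cross_mulnI x y u v : x != y -> x * u + y * v = x * v + y * u -> u = v.
Proof. by move=> /eqP x_neq_y E; case: (ltngtP u v) => // uv; nia. Qed.

Lemma part_sum_of_const_nbr_sum_Hrel n q (u : Hvert n q -> nat) K :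
  0 < n -> (forall x, nbr_sum (Hrel n q) u x = K) ->
  forall i, (q - 1) * part_sum u i = K.
Proof.
move=> n_gt0 uK i; pose j0 : 'I_n := Ordinal n_gt0.
have part_sum_eq i' : part_sum u i' = part_sum u i.
  by have := nbr_sum_Hrel u i j0; have := nbr_sum_Hrel u i' j0; rewrite !uK; lia.
have := nbr_sum_Hrel u i j0.
rewrite uK sum_Hvert (eq_bigr _ (fun i' _ => part_sum_eq i')) sum_nat_const card_ord.
by rewrite mulnBl mul1n; lia.
Qed.

Lemma const_of_affine_nbr_sum_Hrel m p (u : Hvert m p -> nat) alpha beta k :
  0 < beta -> alpha * m != beta ->
  (forall x, alpha * nbr_sum (Hrel m p) u x + beta * u x = k) ->
  forall x, (alpha * ((p - 1) * m) + beta) * u x = k.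
Proof.
move=> beta_gt0 alpha_m_neq uk [i j].
have nbr_sum_row i' j' : nbr_sum (Hrel m p) u (i', j') = nbr_sum (Hrel m p) u (i', j).
  by have := nbr_sum_Hrel u i' j; have := nbr_sum_Hrel u i' j'; lia.
have row_const i' j' : u (i', j') = u (i', j).
  apply/eqP; rewrite -(eqn_pmul2l beta_gt0); apply/eqP.
  by have := uk (i', j); have := uk (i', j'); rewrite nbr_sum_row; lia.
have part_sumE i' : part_sum u i' = m * u (i', j).
  by rewrite /part_sum (eq_bigr _ (fun j' _ => row_const i' j')) sum_nat_const card_ord.
have col_const i' : u (i', j) = u (i, j).
  apply: (cross_mulnI alpha_m_neq).
  have := nbr_sum_Hrel u i j; have := nbr_sum_Hrel u i' j; rewrite !part_sumE => Ei' Ei.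
  have : alpha * nbr_sum (Hrel m p) u (i', j) + alpha * m * u (i', j) =
         alpha * nbr_sum (Hrel m p) u (i, j) + alpha * m * u (i, j).
    by rewrite -!mulnA -!mulnDr Ei Ei'.
  by have := uk (i, j); have := uk (i', j); lia.
have nbr_sumE : nbr_sum (Hrel m p) u (i, j) = (p - 1) * m * u (i, j).
  have := nbr_sum_Hrel u i j; rewrite sum_Hvert part_sumE.
  rewrite (eq_bigr _ (fun i' _ => part_sumE i')).
  rewrite (eq_bigr _ (fun i' _ => congr1 (muln m) (col_const i'))).
  rewrite sum_nat_const card_ord mulnA.
  by rewrite !mulnBl mul1n => <-; rewrite addnK.
by rewrite -(uk (i, j)) nbr_sumE mulnDl !mulnA.
Qed.

Definition lex_part_sum (T1 : finType) b n q (w : T1 * ('I_b * Hvert n q) -> nat)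
    (P : T1 * ('I_b * 'I_q)) : nat :=
  \sum_(j < n) w (P.1, (P.2.1, (P.2.2, j))).

Lemma sum_lex_part_sum (T1 : finType) b n q (w : T1 * ('I_b * Hvert n q) -> nat) :
  \sum_x w x = \sum_P lex_part_sum w P.
Proof.
rewrite sum_pair [RHS]sum_pair; apply: eq_bigr => g _.
by rewrite sum_copies_Hvert sum_pair.
Qed.

Definition kotzig_array (n t : nat) (s : nat -> nat -> nat) : Prop :=
  [/\ forall j k, j < n -> k < t -> s j k < t,
      forall j k k', j < n -> k < t -> k' < t -> s j k = s j k' -> k = k'
    & exists c, forall k, k < t -> \sum_(j < n) s j k = c].

Lemma kotzig_array0 t : kotzig_array 0 t (fun _ k => k).
Proof. by split=> //; exists 0 => k _; rewrite big_ord0. Qed.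

Lemma kotzig_array2 t : kotzig_array 2 t (fun j k => if j == 0 then k else t.-1 - k).
Proof.
split=> [[|j] k|[|j] k k'|] /=; try lia.
by exists t.-1 => k k_lt; rewrite !big_ord_recr big_ord0 /=; lia.
Qed.

(* Row 1 is (k + h) mod (2h + 1) and row 2 is 3h minus rows 0 and 1: it lists the even
   residues downwards, then the odd ones. *)
Lemma kotzig_array3 h :
  kotzig_array 3 (2 * h + 1) (fun j k =>
    if j == 0 then k
    else if j == 1 then (if k <= h then k + h else k - h - 1)
    else if k <= h then 2 * h - 2 * k else 4 * h + 1 - 2 * k).
Proof.
split=> [[|[|j]] k|[|[|j]] k k'|] /=; try (case: (leqP k h); try case: (leqP k' h); lia).
by exists (3 * h) => k k_lt; rewrite !big_ord_recr big_ord0 /=; case: leqP; lia.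
Qed.

Lemma kotzig_array_cat n1 n2 t s1 s2 :
  kotzig_array n1 t s1 -> kotzig_array n2 t s2 ->
  kotzig_array (n1 + n2) t (fun j => if j < n1 then s1 j else s2 (j - n1)).
Proof.
move=> [s1_lt s1_inj [c1 s1_sum]] [s2_lt s2_inj [c2 s2_sum]]; split.
- move=> j k j_lt k_lt.
  by case: ifP => j_n1; [apply: s1_lt | apply: s2_lt] => //; lia.
- move=> j k k' j_lt k_lt k'_lt.
  by case: ifP => j_n1; [apply: s1_inj | apply: s2_inj] => //; lia.
exists (c1 + c2) => k k_lt; rewrite big_split_ord /=.
under eq_bigr => j _ do rewrite ltn_ord.
under [X in _ + X]eq_bigr => j _ do rewrite ltnNge leq_addr /= addKn.
by rewrite s1_sum ?s2_sum.
Qed.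

Lemma kotzig_array_exists n t :
  n != 1 -> ~~ odd n || odd t -> exists s, kotzig_array n t s.
Proof.
have kotzig_even g : exists s, kotzig_array (2 * g) t s.
  elim: g => [|g [s s_kotzig]]; first by exists (fun _ k => k); apply: kotzig_array0.
  by eexists; rewrite mulnS; apply: kotzig_array_cat (kotzig_array2 t) s_kotzig.
move=> n_neq1; case/boolP: (odd n) => [n_odd /= t_odd | n_even _].
  have -> : n = 3 + 2 * n./2.-1 by move: n_neq1 (odd_double_half n); rewrite n_odd; lia.
  have t_eq : t = 2 * t./2 + 1 by move: (odd_double_half t); rewrite t_odd; lia.
  have [s s_kotzig] := kotzig_even n./2.-1; rewrite t_eq in s_kotzig *.
  by eexists; apply: kotzig_array_cat (kotzig_array3 _) s_kotzig.
have -> : n = 2 * n./2 by move: (odd_double_half n); rewrite (negbTE n_even); lia.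
exact: kotzig_even.
Qed.

Definition kotzig_label (U : finType) (s : nat -> nat -> nat) (u : U) (j : nat) : nat :=
  j * #|U| + s j (enum_rank u).

Section KotzigLabel.

Variables (U : finType) (n : nat) (s : nat -> nat -> nat).
Hypothesis s_kotzig : kotzig_array n #|U| s.

Lemma kotzig_label_lt (u : U) j : j < n -> kotzig_label s u j < n * #|U|.
Proof.
case: s_kotzig => s_lt _ _ j_lt; rewrite /kotzig_label.
by have := s_lt j (enum_rank u) j_lt (ltn_ord _); nia.
Qed.

Lemma kotzig_label_inj (u u' : U) j j' :
  j < n -> j' < n -> kotzig_label s u j = kotzig_label s u' j' -> u = u' /\ j = j'.
Proof.
case: s_kotzig => s_lt s_inj _ j_lt j'_lt E.
have U_gt0 : 0 < #|U| by apply/card_gt0P; exists u.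
have s_ltU j0 (v : U) : j0 < n -> s j0 (enum_rank v) < #|U| by move/s_lt; apply.
have j_eq : j = j'.
  by have := congr1 (divn^~ #|U|) E; rewrite /kotzig_label !divnMDl ?divn_small ?s_ltU ?addn0.
move: E; rewrite /kotzig_label -j_eq => /addnI /(s_inj _ _ _ j_lt (ltn_ord _) (ltn_ord _)).
by move/val_inj/enum_rank_inj.
Qed.

Lemma kotzig_label_sum : exists K, forall u : U, \sum_(j < n) (kotzig_label s u j).+1 = K.
Proof.
case: s_kotzig => _ _ [c s_sum]; exists (\sum_(j < n) (j * #|U|).+1 + c) => u.
by rewrite -(s_sum (enum_rank u)) // -big_split.
Qed.

End KotzigLabel.

Lemma distance_magic_of_labels (T : finType) (e : rel T) (w : T -> nat) k :
  (forall x, w x < #|T|) -> injective w ->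
  (forall x, nbr_sum e (fun y => (w y).+1) x = k) -> distance_magic e.
Proof.
move=> w_lt w_inj wk; exists (fun x => Ordinal (w_lt x)); split; last by exists k.
apply: inj_card_bij; last by rewrite card_ord.
by move=> x y /(congr1 val) /w_inj.
Qed.

Lemma nbr_sum_lex_of_const_part_sums (T1 : finType) (e1 : rel T1) b n q r K
    (w : T1 * ('I_b * Hvert n q) -> nat) :
  irreflexive e1 -> (forall g, #|e1 g| = r) -> (forall P, lex_part_sum w P = K) ->
  forall x, nbr_sum (lex_rel e1 (copies_rel b (Hrel n q))) w x =
            r * (b * (q * K)) + (q - 1) * K.
Proof.
move=> e1_irr e1_reg wK [g [c [i j]]].
have part_sumE g' c' i' : part_sum (fun y => w (g', (c', y))) i' = K := wK (g', (c', i')).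
have fibre_sumE g' : \sum_y w (g', y) = b * (q * K).
  rewrite sum_copies_Hvert (eq_bigr (fun=> q * K)) ?sum_nat_const ?card_ord // => c' _.
  by rewrite (eq_bigr (fun=> K)) ?sum_nat_const ?card_ord.
rewrite nbr_sum_lex // nbr_sum_copies (_ : nbr_sum e1 _ g = nbr_sum e1 (fun=> b * (q * K)) g).
  rewrite nbr_sum_cst e1_reg; congr (_ + _).
  have := nbr_sum_Hrel (fun y => w (g, (c, y))) i j.
  rewrite part_sumE sum_Hvert (eq_bigr (fun=> K)) ?sum_nat_const ?card_ord //.
  by rewrite mulnBl mul1n => <-; rewrite addnK.
by apply: eq_bigr => y _; rewrite fibre_sumE.
Qed.

Lemma part_sums_of_const_nbr_sum_lex (T1 : finType) (e1 : rel T1) b n q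
    (w : T1 * ('I_b * Hvert n q) -> nat) k :
  irreflexive e1 -> 0 < n ->
  (forall x, nbr_sum (lex_rel e1 (copies_rel b (Hrel n q))) w x = k) ->
  forall g c i,
    nbr_sum e1 (fun g' => \sum_y w (g', y)) g + (q - 1) * lex_part_sum w (g, (c, i)) = k.
Proof.
move=> e1_irr n_gt0 wk g c i.
have lexE x2 := nbr_sum_lex (copies_rel b (Hrel n q)) w g x2 e1_irr.
have wk_g x : nbr_sum (Hrel n q) (fun y => w (g, (c, y))) x =
              k - nbr_sum e1 (fun g' => \sum_y w (g', y)) g.
  by rewrite -(nbr_sum_copies (Hrel n q) (fun y => w (g, y)) c x) -(wk (g, (c, x))) lexE addKn.
rewrite (part_sum_of_const_nbr_sum_Hrel n_gt0 wk_g).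
by rewrite -(wk (g, (c, (i, Ordinal n_gt0)))) lexE addKn.
Qed.

Section LexProductOfCompleteMultipartite.

Variables a b m n p q : nat.
Local Notation T1 := ('I_a * Hvert m p)%type.
Local Notation T := (T1 * ('I_b * Hvert n q))%type.
Local Notation U := (T1 * ('I_b * 'I_q))%type.
Local Notation N := #|{: T}|.
Local Notation G1 := (copies_rel a (Hrel m p)).
Local Notation G := (lex_rel G1 (copies_rel b (Hrel n q))).

Lemma lex_part_sums_eq (w : T -> nat) k :
  0 < b -> 0 < n -> 1 < q -> (forall x, nbr_sum G w x = k) ->
  forall P P', lex_part_sum w P = lex_part_sum w P'.
Proof.
move=> b_gt0 n_gt0 q_gt1 wk.
have G1_irr : irreflexive G1 by apply/irreflexive_copies_rel/irreflexive_Hrel.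
have inner := part_sums_of_const_nbr_sum_lex G1_irr n_gt0 wk.
pose c0 : 'I_b := Ordinal b_gt0; pose i0 : 'I_q := Ordinal (ltnW q_gt1).
pose P0 g := lex_part_sum w (g, (c0, i0)).
have part_sumE g c i : lex_part_sum w (g, (c, i)) = P0 g.
  apply/eqP; rewrite -(@eqn_pmul2l (q - 1)) ?subn_gt0 //.
  by rewrite -(eqn_add2l (nbr_sum G1 (fun g' => \sum_y w (g', y)) g)) inner [X in _ == X]inner.
have fibre_sumE g : \sum_y w (g, y) = b * q * P0 g.
  rewrite sum_copies_Hvert (eq_bigr (fun=> q * P0 g)) ?sum_nat_const ?card_ord ?mulnA //.
  move=> c _; rewrite (eq_bigr (fun=> P0 g)) ?sum_nat_const ?card_ord //.
  by move=> i _; apply: part_sumE.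
have outer g : b * q * nbr_sum G1 P0 g + (q - 1) * P0 g = k.
  rewrite /nbr_sum big_distrr -(inner g c0 i0).
  by congr (_ + _); apply: eq_bigr => y _; rewrite fibre_sumE.
have P0k g : (b * q * ((p - 1) * m) + (q - 1)) * P0 g = k.
  case: g => d x; apply: (@const_of_affine_nbr_sum_Hrel _ _ (fun x => P0 (d, x))).
  - by rewrite subn_gt0.
  - have [->|m_gt0] := posnP m; first by rewrite muln0 eq_sym -lt0n subn_gt0.
    rewrite gtn_eqF //; apply: leq_trans (leq_trans (leq_pmull q b_gt0) (leq_pmulr _ m_gt0)).
    by rewrite subn1 prednK // ltnW.
  - by move=> y; rewrite -nbr_sum_copies; apply: outer.
move=> [g [c i]] [g' [c' i']]; rewrite !part_sumE.
apply/eqP; rewrite -(@eqn_pmul2l (b * q * ((p - 1) * m) + (q - 1))) ?P0k //.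
by rewrite addn_gt0 subn_gt0 q_gt1 orbT.
Qed.

Lemma lex_magic_part_sum (f : T -> 'I_N) k :
  0 < b -> 0 < n -> 1 < q -> bijective f ->
  (forall x, nbr_sum G (fun y => (f y).+1) x = k) ->
  forall P, 2 * lex_part_sum (fun y => (f y).+1) P = n * N.+1.
Proof.
move=> b_gt0 n_gt0 q_gt1 f_bij fk P.
have := double_sum_bij_labels f_bij.
rewrite sum_lex_part_sum (eq_bigr _ (fun P' _ => lex_part_sums_eq b_gt0 n_gt0 q_gt1 fk P' P)).
have cardT : N = #|{: U}| * n by rewrite !card_prod !card_ord; lia.
rewrite sum_nat_const [X in _ = X * _]cardT mulnCA -mulnA => /eqP.
by rewrite eqn_pmul2l => [/eqP|]; last by apply/card_gt0P; exists P.
Qed.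

Lemma lex_magic_of_kotzig_array s : kotzig_array n #|{: U}| s -> distance_magic G.
Proof.
move=> s_kotzig; have [K KE] := kotzig_label_sum s_kotzig.
pose w (x : T) := kotzig_label s ((x.1, (x.2.1, x.2.2.1)) : U) x.2.2.2.
apply: (@distance_magic_of_labels _ _ w ((p - 1) * m * (b * (q * K)) + (q - 1) * K)).
- have cardT : N = n * #|{: U}| by rewrite !card_prod !card_ord; lia.
  by move=> x; rewrite cardT kotzig_label_lt.
- move=> [g [c [i j]]] [g' [c' [i' j']]].
  move/(kotzig_label_inj s_kotzig (ltn_ord j) (ltn_ord j')).
  by case=> -[-> -> ->] /val_inj ->.
apply: nbr_sum_lex_of_const_part_sums => [|g|[g [c i]]].
- exact/irreflexive_copies_rel/irreflexive_Hrel.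
- exact: card_copies_Hrel_nbrs.
- exact: (KE (g, (c, i))).
Qed.

End LexProductOfCompleteMultipartite.

Lemma modn2_0 k : (k = 0 %[mod 2]) <-> ~~ odd k.
Proof. by rewrite modn2; case: odd. Qed.

Lemma modn2_1 k : (k = 1 %[mod 2]) <-> odd k.
Proof. by rewrite modn2; case: odd. Qed.

Theorem theorem13 (a b m n p q : nat) :
  1 <= a -> 1 <= b -> 1 < m -> 1 < n -> 1 < p -> 1 < q ->
  (distance_magic
     (lex_rel (copies_rel a (Hrel m p)) (copies_rel b (Hrel n q)))
   <-> (n = 0 %[mod 2] \/ m * n * a * b * p * q = 1 %[mod 2])).
Proof.
move=> a_gt0 b_gt0 m_gt1 n_gt1 p_gt1 q_gt1.
have cardT : #|{: ('I_a * Hvert m p) * ('I_b * Hvert n q)}| = m * n * a * b * p * q.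
  by rewrite !card_prod !card_ord; lia.
have cardU : #|{: ('I_a * Hvert m p) * ('I_b * 'I_q)}| * n = m * n * a * b * p * q.
  by rewrite !card_prod !card_ord; lia.
split=> [[f [f_bij [k fk]]] | parity].
  case/boolP: (odd n) => [n_odd | /modn2_0]; [right; apply/modn2_1 | by left].
  pose P : ('I_a * Hvert m p) * ('I_b * 'I_q) :=
    ((Ordinal a_gt0, (Ordinal (ltnW p_gt1), Ordinal (ltnW m_gt1))),
     (Ordinal b_gt0, Ordinal (ltnW q_gt1))).
  have /(congr1 odd) := lex_magic_part_sum b_gt0 (ltnW n_gt1) q_gt1 f_bij fk P.
  by rewrite oddM /= oddM oddS -cardT n_odd; case: odd.
have [s s_kotzig] : exists s, kotzig_array n #|{: ('I_a * Hvert m p) * ('I_b * 'I_q)}| s.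
  apply: kotzig_array_exists; first by rewrite neq_ltn n_gt1 orbT.
  case: parity => [/modn2_0 -> // | /modn2_1].
  by rewrite -cardU oddM => /andP[->]; rewrite orbT.
exact: lex_magic_of_kotzig_array s_kotzig.
Qed.
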